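(* Let $k\geq 2$ and let $\mathcal{T}$ be a generalized $k$-forest whose vertex set $V(\mathcal T)$ (the union of its edges) has $v$ elements. Then there is a tight $k$-tree $\mathcal{T}^+$ with vertex set $V(\mathcal T)$ such that every edge of $\mathcal{T}$ is an edge of $\mathcal{T}^+$.
   Context: A $k$-graph is a family of $k$-element sets (edges); its vertex set is the union of its edges. Generalized $k$-forests are defined inductively as sequences of $k$-sets: a single $k$-set $E_1$ is a generalized $k$-forest. If $\{E_1,\dots,E_u\}$ is a generalized $k$-forest with vertex set $V=E_1\cup\dots\cup E_u$, and $A_{u+1}\subseteq E_i$ for some $1\leq i\leq u$ (with $A_{u+1}$ possibly empty), and $B$ is a set with $B\cap V=\emptyset$ and $|A_{u+1}|+|B|=k$, then $\{E_1,\dots,E_u,E_{u+1}\}$ with $E_{u+1}:=A_{u+1}\cup B$ is a generalized $k$-forest; $A_{u+1}$ is called the defining set of $E_{u+1}$ (so $A_{u+1}=E_{u+1}\cap(E_1\cup\dots\cup E_u)$). A generalized $k$-forest is a generalized $k$-tree if it is connected (equivalently, all defining sets $A_2,\dots,A_{q}$ are nonempty). It is a tight $k$-forest if every defining set is either empty or has exactly $k-1$ elements, and a tight $k$-tree if it is a connected tight $k$-forest, i.e. every defining set has exactly $k-1$ elements. *)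

From mathcomp Require Import all_boot.
Set Implicit Arguments.
Unset Strict Implicit.
Unset Printing Implicit Defensive.

(* A k-graph on a finite ambient type T is a sequence of edges (sets of T). *)
Definition vset (T : finType) (s : seq {set T}) : {set T} :=
  \bigcup_(E <- s) E.

(* Forests built by the inductive rule of the paper, where the size of
   each defining set A_{u+1} must satisfy the predicate P.
   The sequence is extended at its end: E_{u+1} := A_{u+1} :|: B. *)
Inductive forest_with (T : finType) (k : nat) (P : nat -> bool)
  : seq {set T} -> Prop :=
| fw_single (E : {set T}) : #|E| = k -> forest_with k P [:: E]
| fw_step (s : seq {set T}) (Ei A B : {set T}) :
    forest_with k P s ->
    Ei \in s -> A \subset Ei ->
    [disjoint B & vset s] ->
    #|A| + #|B| = k ->
    P #|A| ->
    forest_with k P (rcons s (A :|: B)).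

Definition gen_forest (T : finType) (k : nat) (s : seq {set T}) : Prop :=
  forest_with k (fun _ => true) s.

Definition tight_forest (T : finType) (k : nat) (s : seq {set T}) : Prop :=
  forest_with k (fun a => (a == 0) || (a == k.-1)) s.

Definition tight_tree (T : finType) (k : nat) (s : seq {set T}) : Prop :=
  forest_with k (fun a => a == k.-1) s.

From mathcomp Require Import all_boot.
Set Implicit Arguments.
Unset Strict Implicit.
Unset Printing Implicit Defensive.

(* When F grows by an edge A :|: B, with A inside an
   old edge C and B a set of new vertices, we have by induction a tight tree
   S containing all previous edges, and C is one of its edges.  We then walk
   from C to A :|: B one vertex at a time: replace a vertex c of C outside A
   by a new vertex b of B; the edge (C :\ c) :|: [set b] has a defining set
   of size k-1, so adding it keeps S a tight tree, and its intersection with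
   the remaining target is one element larger.  After #|B| such pivots the
   current edge is exactly A :|: B (lemma [tight_tree_extend]). *)

Section Forests.
Variable T : finType.
Implicit Types (s : seq {set T}) (A B C E : {set T}).

Lemma vset_rcons s E : vset (rcons s E) = vset s :|: E.
Proof. by rewrite /vset -cats1 big_cat big_seq1. Qed.

Lemma edge_sub_vset s E : E \in s -> E \subset vset s.
Proof. by move=> Es; rewrite /vset bigcup_seq (bigcup_sup E). Qed.

(* In any forest built by the inductive rule, every edge has exactly k
   elements: the new vertices B are disjoint from the defining set A. *)
Lemma forest_edge_card k P s :
  forest_with k P s -> forall E, E \in s -> #|E| = k.
Proof.
elim=> [E kE | s' Ei A B _ IH Ei_s A_Ei B_new cardAB _] F.
  by rewrite inE => /eqP->.
rewrite mem_rcons inE => /orP[/eqP-> | /IH //].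
have A_old : A \subset vset s' := subset_trans A_Ei (edge_sub_vset Ei_s).
have disjAB : [disjoint A & B] by rewrite disjoint_sym (disjointWr A_old).
by rewrite -cardAB; apply/eqP; rewrite (leq_card_setU A B).
Qed.

(* Pivot step: in a tight k-tree, replacing one vertex c of an edge C by a
   new vertex b gives an edge whose defining set C :\ c has k-1 elements. *)
Lemma tight_tree_pivot k s C c b :
  0 < k -> tight_tree k s -> C \in s -> c \in C -> b \notin vset s ->
  tight_tree k (rcons s (C :\ c :|: [set b])).
Proof.
move=> k_gt0 tree_s C_s cC b_new.
have cardCc : #|C :\ c| = k.-1.
  by move: (cardsD1 c C); rewrite cC (forest_edge_card tree_s C_s) add1n => ->.
apply: (fw_step tree_s C_s).
- exact: subsetDl.
- by rewrite disjoints1.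
- by rewrite cards1 addn1 cardCc prednK.
- by rewrite /= cardCc.
Qed.

Lemma vset_pivot s C c b :
  C \in s -> vset (rcons s (C :\ c :|: [set b])) = vset s :|: [set b].
Proof.
move=> C_s; apply/eqP; rewrite vset_rcons eqEsubset subUset subsetUl /=.
rewrite setSU ?(subset_trans (subsetDl C _) (edge_sub_vset C_s)) //=.
by rewrite setUS // sub1set !inE eqxx orbT.
Qed.

Lemma tight_tree_extend k : 0 < k -> forall n s A B C,
  tight_tree k s -> #|B| = n -> C \in s -> A \subset C ->
  [disjoint B & vset s] -> #|A| + #|B| = k ->
  exists s', [/\ tight_tree k s', vset s' = vset s :|: B,
                 {subset s <= s'} & A :|: B \in s'].
Proof.
move=> k_gt0; elim=> [|n IH] s A B C tree_s cardB C_s A_C B_new cardAB.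
  have -> : B = set0 by apply: cards0_eq.
  have -> : A = C.
    apply/eqP; rewrite eqEcard A_C (forest_edge_card tree_s C_s).
    by rewrite -cardAB cardB addn0 leqnn.
  by exists s; split; rewrite ?setU0.
have cardC := forest_edge_card tree_s C_s.
have [b bB] : exists b, b \in B by apply/card_gt0P; rewrite cardB.
have b_new : b \notin vset s by rewrite (disjointFr B_new).
have [c cCA] : exists c, c \in C :\: A.
  apply/card_gt0P; rewrite cardsD (setIidPr A_C) cardC -cardAB cardB.
  by rewrite addnS subSn ?leq_addr // addKn.
have [cA cC] : c \notin A /\ c \in C by move: cCA; rewrite inE => /andP.
set D := C :\ c :|: [set b].
have tree_sD : tight_tree k (rcons s D) by apply: tight_tree_pivot.
have D_sD : D \in rcons s D by rewrite mem_rcons mem_head.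
have bA : b \notin A.
  by apply: contra b_new => /(subsetP A_C) /(subsetP (edge_sub_vset C_s)).
have bA_D : b |: A \subset D.
  apply/subsetP => x; rewrite !inE => /orP[-> | xA]; first exact: orbT.
  rewrite (subsetP A_C x xA) andbT; apply/orP; left.
  by apply: contraNneq cA => <-.
have vset_sD : vset (rcons s D) = vset s :|: [set b] by apply: vset_pivot.
have Bb_new : [disjoint B :\ b & vset (rcons s D)].
  rewrite vset_sD disjoints_subset.
  apply/subsetP => x; rewrite !inE => /andP[xb xB]; rewrite negb_or xb andbT.
  by rewrite (disjointFr B_new).
have cardBb : #|B :\ b| = n.
  by move: (cardsD1 b B); rewrite bB cardB add1n => -[].
have cardAB' : #|b |: A| + #|B :\ b| = k.
  by rewrite cardsU1 bA cardBb add1n addSn -addnS -cardB.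
have [s' [tree_s' vset_s' sub_s' edge_s']] :=
  IH _ _ _ _ tree_sD cardBb D_sD bA_D Bb_new cardAB'.
exists s'; split=> //.
- by rewrite vset_s' vset_sD -setUA setD1K.
- by move=> E Es; apply: sub_s'; rewrite mem_rcons inE Es orbT.
- by rewrite -(setD1K bB) setUCA setUA.
Qed.

End Forests.

Theorem proposition3p1 (T : finType) (k : nat) (F : seq {set T}) :
  2 <= k -> gen_forest k F ->
  exists Fplus : seq {set T},
    tight_tree k Fplus /\ vset Fplus = vset F /\ {subset F <= Fplus}.
Proof.
move=> k_ge2; have k_gt0 : 0 < k by apply: leq_trans k_ge2.
elim=> [E cardE | s Ei A B _ [S [tree_S [vset_S sub_S]]] Ei_s A_Ei B_new
          cardAB _].
  by exists [:: E]; split; [apply: fw_single | split=> // x].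
have A_old : A \subset vset s := subset_trans A_Ei (edge_sub_vset Ei_s).
have B_newS : [disjoint B & vset S] by rewrite vset_S.
have [S' [tree_S' vset_S' sub_S' AB_S']] :=
  tight_tree_extend k_gt0 tree_S erefl (sub_S _ Ei_s) A_Ei B_newS cardAB.
exists S'; split=> //; split.
  by rewrite vset_S' vset_S vset_rcons setUA (setUidPl A_old).
by move=> E; rewrite mem_rcons inE => /orP[/eqP-> // | /sub_S /sub_S'].
Qed.
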